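(* Let $\|\cdot\|$ be a norm on $\mathbb{R}^m$ with dual norm $\|\cdot\|_*$. Let $\mathbf{z}_i=(\mathbf{x}_i,y_i)\in\mathbb{R}^m$, $i=1,\ldots,N$, be observations with $\|\mathbf{z}_i\|\le R$ for all $i$, and let $\mathbf{Z}\in\mathbb{R}^{m\times N}$ be the matrix with columns $\mathbf{z}_i$. Let $\mathcal{B}\subseteq\mathbb{R}^{m-1}$, $\gamma_N>0$, and let $\hat{\boldsymbol{\beta}}$ be an optimal solution of $$\min_{\boldsymbol{\beta}}\ \|(-\boldsymbol{\beta},1)\|_*\quad\text{s.t.}\quad \|(-\boldsymbol{\beta},1)'\mathbf{Z}\|_1\le\gamma_N,\ \ \boldsymbol{\beta}\in\mathcal{B}.$$ Let $\boldsymbol{\beta}^*\in\mathbb{R}^{m-1}$ satisfy $\|\mathbf{Z}'(-\boldsymbol{\beta}^*,1)\|_1\le\gamma_N$ and $\boldsymbol{\beta}^*\in\mathcal{B}$. Define $$\mathcal{A}(\boldsymbol{\beta}^* )=\operatorname{cone}\{\mathbf{v}\in\mathbb{R}^m:\ \|(-\boldsymbol{\beta}^*,1)+\mathbf{v}\|_*\le\|(-\boldsymbol{\beta}^*,1)\|_*\}\cap\mathbb{S}^m,$$ and assume there is $\underline{\alpha}>0$ with $\inf_{\mathbf{v}\in\mathcal{A}(\boldsymbol{\beta}^* )}\mathbf{v}'\mathbf{Z}\mathbf{Z}'\mathbf{v}\ge\underline{\alpha}$. Then $$\|\hat{\boldsymbol{\beta}}-\boldsymbol{\beta}^*\|_2\le\frac{2R\gamma_N}{\underline{\alpha}}\Psi(\boldsymbol{\beta}^*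 ),\qquad \Psi(\boldsymbol{\beta}^* )=\sup_{\mathbf{v}\in\mathcal{A}(\boldsymbol{\beta}^* )}\|\mathbf{v}\|_*.$$
   Context: $\mathbb{S}^m$ denotes the unit Euclidean sphere in $\mathbb{R}^m$; $\operatorname{cone}(S)$ is the cone generated by $S$. The dual norm is $\|\boldsymbol{\theta}\|_*=\sup_{\|\mathbf{z}\|\le1}\boldsymbol{\theta}'\mathbf{z}$; $(-\boldsymbol{\beta},1)\in\mathbb{R}^m$ is $-\boldsymbol{\beta}$ with coordinate $1$ appended. *)

From HB Require Import structures.
From mathcomp Require Import all_boot all_order all_algebra.
From mathcomp Require Import boolp classical_sets reals.
Set Implicit Arguments. Unset Strict Implicit. Unset Printing Implicit Defensive.
Import Order.TTheory GRing.Theory Num.Theory.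
Local Open Scope ring_scope.
Local Open Scope classical_set_scope.

Definition is_norm (R : realType) (m : nat) (nrm : 'cV[R]_m -> R) : Prop :=
  [/\ forall x, 0 <= nrm x,
      forall x, nrm x = 0 -> x = 0,
      forall (a : R) x, nrm (a *: x) = `|a| * nrm x
    & forall x y, nrm (x + y) <= nrm x + nrm y].

Definition dotv (R : realType) (m : nat) (u v : 'cV[R]_m) : R := (u^T *m v) 0 0.

Definition dual_norm (R : realType) (m : nat) (nrm : 'cV[R]_m -> R)
  (theta : 'cV[R]_m) : R :=
  sup [set dotv theta z | z in [set z | nrm z <= 1]].

Definition norm2 (R : realType) (m : nat) (v : 'cV[R]_m) : R :=
  Num.sqrt (\sum_(i < m) v i 0 ^+ 2).

Definition norm1_row (R : realType) (N : nat) (r : 'rV[R]_N) : R :=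
  \sum_(j < N) `|r 0 j|.

Definition sphere (R : realType) (m : nat) : set 'cV[R]_m :=
  [set v | norm2 v = 1].

Definition cone (R : realType) (m : nat) (S : set 'cV[R]_m) : set 'cV[R]_m :=
  [set v | exists (k : nat) (c : 'I_k -> R) (s : 'I_k -> 'cV[R]_m),
      (forall i, 0 <= c i) /\ (forall i, S (s i)) /\
      v = \sum_(i < k) c i *: s i].

Definition ext (R : realType) (n : nat) (beta : 'cV[R]_n) : 'cV[R]_(n + 1) :=
  col_mx (- beta) (1 : 'cV[R]_1).

Definition Aset (R : realType) (n : nat) (nrm : 'cV[R]_(n + 1) -> R)
  (beta : 'cV[R]_n) : set 'cV[R]_(n + 1) :=
  cone [set v | dual_norm nrm (ext beta + v) <= dual_norm nrm (ext beta)]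
  `&` @sphere R (n + 1).

From HB Require Import structures.
From mathcomp Require Import all_boot all_order all_algebra.
From mathcomp Require Import boolp classical_sets reals.
From mathcomp Require Import topology normedtype derive.
From mathcomp Require Import lra.
Set Implicit Arguments. Unset Strict Implicit. Unset Printing Implicit Defensive.
Import Order.TTheory GRing.Theory Num.Theory.
Import numFieldNormedType.Exports.
Local Open Scope ring_scope.
Local Open Scope classical_set_scope.

(* Let v = (-betahat, 1) - (-betastar, 1).  Optimality of betahat against the
   feasible betastar puts v in the descent cone of the dual norm at
   (-betastar, 1), so v / |v|_2 lies in A(betastar); feasibility of both points
   gives |v'Z|_1 <= 2 gammaN.  Hence
     alpha |v|_2^2 <= sum_j (v'z_j)^2 <= max_j |v'z_j| * |v'Z|_1
                   <= |v|_* Rad * 2 gammaN <= |v|_2 Psi Rad * 2 gammaN.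
   Psi is a genuine (finite) supremum because in finite dimension every norm
   dominates a multiple of the sup norm, which bounds the dual norm on the
   Euclidean sphere. *)

Lemma mx_coord_le_norm (R : realDomainType) p q (z : 'M[R]_(p, q)) i j :
  `|z i j| <= `|z|.
Proof.
rewrite [leRHS]/Num.Def.normr /= mx_normrE.
by apply/bigmax_geP; right; exists (i, j).
Qed.

Lemma compact_rV_unit_sphere (R : realType) k :
  compact [set r : 'rV[R]_k | `|r| = 1].
Proof.
apply: bounded_closed_compact.
  by exists 1; split => // M M1 r /= ->; apply: ltW.
rewrite (_ : [set r | _] = Num.norm @^-1` [set 1]) //.
apply: preimage_closed; last exact: closed_eq.
by move=> x _; apply: norm_continuous.
Qed.

Section Norm.
Variables (R : realType) (m : nat) (nrm : 'cV[R]_m -> R).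
Hypothesis hn : is_norm nrm.

Lemma nrm_ge0 x : 0 <= nrm x. Proof. by case: hn => + _ _ _; apply. Qed.

Lemma nrm_eq0 x : nrm x = 0 -> x = 0.
Proof. by case: hn => _ + _ _; apply. Qed.

Lemma nrmZ a x : nrm (a *: x) = `|a| * nrm x.
Proof. by case: hn => _ _ + _; apply. Qed.

Lemma ler_nrmD x y : nrm (x + y) <= nrm x + nrm y.
Proof. by case: hn => _ _ _; apply. Qed.

Lemma nrm0 : nrm 0 = 0.
Proof. by rewrite -(scale0r 0) nrmZ normr0 mul0r. Qed.

Lemma nrmN x : nrm (- x) = nrm x.
Proof. by rewrite -scaleN1r nrmZ normrN normr1 mul1r. Qed.

Lemma ler_dist_nrm x y : `|nrm x - nrm y| <= nrm (x - y).
Proof.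
have := ler_nrmD (x - y) y; have := ler_nrmD (y - x) x.
rewrite !subrK -opprB nrmN ler_norml => ? ?; apply/andP; split; lra.
Qed.

Lemma nrm_le_sum_coord z : nrm z <= \sum_i `|z i 0| * nrm (delta_mx i 0).
Proof.
rewrite {1}(matrix_sum_delta z); under eq_bigr do rewrite big_ord1.
elim/big_ind2: _ => [|a b c d ac bd|i _]; first by rewrite nrm0.
- exact: le_trans (ler_nrmD _ _) (lerD ac bd).
- by rewrite nrmZ.
Qed.

Lemma nrm_trmx_le_mx_norm (r : 'rV[R]_m) :
  nrm r^T <= (\sum_i nrm (delta_mx i 0)) * `|r|.
Proof.
apply: le_trans (nrm_le_sum_coord r^T) _; rewrite mulr_suml.
apply: ler_sum => i _.
by rewrite mulrC ler_wpM2l ?nrm_ge0 // mxE mx_coord_le_norm.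
Qed.

Lemma continuous_nrm_trmx : continuous (fun r : 'rV[R]_m => nrm r^T).
Proof.
pose K := \sum_i nrm (delta_mx i 0 : 'cV[R]_m).
have K0 : 0 <= K by apply: sumr_ge0 => i _; apply: nrm_ge0.
move=> x; apply/(@cvgrPdist_lt _ _ _ (nbhs x) (nbhs_filter x)) => e e0.
apply/nbhs_ballP.
exists (e / (K + 1)); first by rewrite /= divr_gt0 // ltr_wpDl.
move=> y; rewrite -ball_normE /= => xy.
apply: le_lt_trans (ler_dist_nrm _ _) _; rewrite -linearB /=.
apply: le_lt_trans (nrm_trmx_le_mx_norm _) _.
have : (K + 1) * `|x - y| < e by rewrite mulrC -ltr_pdivlMr // ltr_wpDl.
by apply: le_lt_trans; rewrite ler_wpM2r // lerDl.
Qed.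

(* Minimise [nrm] over the compact unit sphere of the sup norm. *)
Lemma nrm_coord_lbound :
  exists2 c, 0 < c & forall (z : 'cV[R]_m) i, c * `|z i 0| <= nrm z.
Proof.
have [m0|m_gt0] := posnP m.
  by exists 1 => // z i; move: (ltn_ord i); rewrite {2}m0.
pose S := [set r : 'rV[R]_m | `|r| = 1].
have S0 : S !=set0.
  pose e := delta_mx 0 (Ordinal m_gt0) : 'rV[R]_m.
  have e0 : e != 0.
    apply/eqP => /matrixP/(_ 0 (Ordinal m_gt0)).
    by rewrite !mxE !eqxx => /eqP; rewrite oner_eq0.
  by exists (`|e|^-1 *: e); apply: normfZV.
have [r0 /[!inE] r0S r0min] := compact_EVT_min S0
  (@compact_rV_unit_sphere R m) (continuous_subspaceT continuous_nrm_trmx).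
have r00 : r0^T != 0.
  by rewrite -trmx0 (inj_eq trmx_inj) -normr_eq0 r0S oner_eq0.
exists (nrm r0^T).
  by rewrite lt_def nrm_ge0 andbT; apply: contra r00 => /eqP /nrm_eq0 ->.
move=> z i; have [->|z0] := eqVneq z 0.
  by rewrite mxE normr0 mulr0 nrm0.
have zT0 : z^T != 0 by rewrite -trmx0 (inj_eq trmx_inj).
have := r0min (`|z^T|^-1 *: z^T); rewrite inE /S /= normfZV // => /(_ erefl).
rewrite /= linearZ /= trmxK nrmZ normfV normr_id mulrC.
rewrite ler_pdivlMr ?normr_gt0 //.
apply: le_trans; rewrite ler_wpM2l ?nrm_ge0 //.
by have := mx_coord_le_norm z^T 0 i; rewrite mxE.
Qed.

End Norm.

Section DotProduct.
Variables (R : realType) (m : nat).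
Implicit Types u v : 'cV[R]_m.

Lemma dotvE u v : dotv u v = \sum_i u i 0 * v i 0.
Proof. by rewrite /dotv mxE; apply: eq_bigr => i _; rewrite mxE. Qed.

Lemma dotv0r u : dotv u 0 = 0.
Proof. by rewrite /dotv mulmx0 mxE. Qed.

Lemma dotv0l v : dotv 0 v = 0.
Proof. by rewrite /dotv trmx0 mul0mx mxE. Qed.

Lemma dotvZr a u v : dotv u (a *: v) = a * dotv u v.
Proof. by rewrite /dotv -scalemxAr mxE. Qed.

Lemma dotvNr u v : dotv u (- v) = - dotv u v.
Proof. by rewrite -scaleN1r dotvZr mulN1r. Qed.

Lemma mulmx_tr_col N u (Z : 'M[R]_(m, N)) j :
  (u^T *m Z) 0 j = dotv u (col j Z).
Proof. by rewrite /dotv !mxE; apply: eq_bigr => i _; rewrite !mxE. Qed.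

End DotProduct.

Section DualNorm.
Variables (R : realType) (m : nat) (nrm : 'cV[R]_m -> R).
Hypothesis hn : is_norm nrm.

Lemma dotv_unit_ball_bound :
  exists C, forall th z, nrm z <= 1 -> dotv th z <= C * \sum_i `|th i 0|.
Proof.
have [c c0 hc] := nrm_coord_lbound hn; exists c^-1 => th z hz.
rewrite dotvE mulr_sumr; apply: le_trans (ler_norm _) _.
apply: le_trans (ler_norm_sum _ _ _) _; apply: ler_sum => i _.
rewrite normrM [leRHS]mulrC ler_wpM2l // -(ler_pM2l c0) mulfV ?gt_eqF //.
exact: le_trans (hc z i) hz.
Qed.

Lemma has_sup_dotv_unit_ball th :
  has_sup [set dotv th z | z in [set z | nrm z <= 1]].
Proof.
have [C hC] := dotv_unit_ball_bound.
split; first by exists (dotv th 0), 0; rewrite //= (nrm0 hn).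
by exists (C * \sum_i `|th i 0|) => _ [z hz <-]; apply: hC.
Qed.

Lemma dotv_le_dual_norm th z : nrm z <= 1 -> dotv th z <= dual_norm nrm th.
Proof.
move=> hz; apply: sup_upper_bound; first exact: has_sup_dotv_unit_ball.
by exists z.
Qed.

Lemma dual_norm_ge0 th : 0 <= dual_norm nrm th.
Proof.
by rewrite -(dotv0r th); apply: dotv_le_dual_norm; rewrite (nrm0 hn).
Qed.

Lemma dual_norm0 : dual_norm nrm 0 = 0.
Proof.
apply/eqP; rewrite eq_le dual_norm_ge0 andbT.
apply: ge_sup.
  by exists (dotv 0 (0 : 'cV[R]_m)), 0; rewrite //= (nrm0 hn).
by move=> _ [z _ <-]; rewrite dotv0l.
Qed.

Lemma normr_dotv_le th z : `|dotv th z| <= dual_norm nrm th * nrm z.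
Proof.
have [z0|nz0] := eqVneq (nrm z) 0.
  by rewrite (nrm_eq0 hn z0) dotv0r normr0 mulr_ge0 ?dual_norm_ge0 ?nrm_ge0.
have nzp : 0 < nrm z by rewrite lt_def nz0 (nrm_ge0 hn).
pose w := (nrm z)^-1 *: z.
have hw : nrm w <= 1 by rewrite /w (nrmZ hn) normfV ger0_norm ?mulVf // ltW.
have hwN : nrm (- w) <= 1 by rewrite (nrmN hn).
have ez : z = nrm z *: w by rewrite scalerA mulfV // scale1r.
rewrite {1}ez dotvZr normrM (ger0_norm (ltW nzp)) mulrC.
rewrite ler_wpM2r ?(nrm_ge0 hn) // ler_norml.
have := dotv_le_dual_norm th hw; have := dotv_le_dual_norm th hwN.
rewrite dotvNr => ? ?; apply/andP; split; lra.
Qed.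

Lemma dual_norm_le_sum_coord :
  exists C, forall th, dual_norm nrm th <= C * \sum_i `|th i 0|.
Proof.
have [C hC] := dotv_unit_ball_bound; exists C => th.
apply: ge_sup; first by exists (dotv th 0), 0; rewrite //= (nrm0 hn).
by move=> _ [z hz <-]; apply: hC.
Qed.

End DualNorm.

Section EuclideanNorm.
Variables (R : realType) (m : nat).
Implicit Types v : 'cV[R]_m.

Lemma norm2_0 : norm2 (0 : 'cV[R]_m) = 0.
Proof. by rewrite /norm2 big1 ?sqrtr0 // => i _; rewrite mxE expr0n. Qed.

Lemma norm2Z a v : norm2 (a *: v) = `|a| * norm2 v.
Proof.
rewrite /norm2 -sqrtr_sqr -sqrtrM ?sqr_ge0 // mulr_sumr.
by congr Num.sqrt; apply: eq_bigr => i _; rewrite mxE exprMn.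
Qed.

Lemma norm2_gt0 v : v != 0 -> 0 < norm2 v.
Proof.
move=> v0; rewrite sqrtr_gt0 lt_def sumr_ge0 ?andbT => [|i _]; last first.
  exact: sqr_ge0.
apply: contra v0; rewrite psumr_eq0 => [/allP v0|i _]; last exact: sqr_ge0.
apply/eqP/matrixP => i j; rewrite (ord1 j) mxE.
by apply/eqP; rewrite -sqrf_eq0; apply: v0; rewrite mem_index_enum.
Qed.

Lemma norm2_normalize v : v != 0 -> norm2 ((norm2 v)^-1 *: v) = 1.
Proof.
by move=> v0; rewrite norm2Z normfV gtr0_norm ?mulVf ?gt_eqF ?norm2_gt0.
Qed.

Lemma coord_le_norm2 v i : `|v i 0| <= norm2 v.
Proof.
rewrite /norm2 -sqrtr_sqr ler_sqrt ?sumr_ge0 // => [|j _]; last exact: sqr_ge0.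
by rewrite (bigD1 i) //= lerDl sumr_ge0 // => j _; rewrite sqr_ge0.
Qed.

Lemma sum_coord_le_norm2 v : \sum_i `|v i 0| <= m%:R * norm2 v.
Proof.
rewrite -[m in m%:R]card_ord -sumr_const mulr_suml.
by apply: ler_sum => i _; rewrite mul1r coord_le_norm2.
Qed.

Lemma cone_sphere_normalize (S : set 'cV[R]_m) v :
  S v -> v != 0 -> (cone S `&` sphere (m:=m)) ((norm2 v)^-1 *: v).
Proof.
move=> Sv v0; split; last exact: norm2_normalize.
exists 1%N, (fun=> (norm2 v)^-1), (fun=> v); rewrite big_ord1.
by split => [_|]; rewrite ?invr_ge0 ?ltW ?norm2_gt0.
Qed.

End EuclideanNorm.

Lemma has_sup_dual_norm_sphere (R : realType) m (nrm : 'cV[R]_m -> R)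
    (S : set 'cV[R]_m) :
  is_norm nrm -> S `<=` sphere (m:=m) -> S !=set0 ->
  has_sup [set dual_norm nrm v | v in S].
Proof.
move=> hn S_sph [v0 Sv0]; split; first by exists (dual_norm nrm v0), v0.
have [C hC] := dual_norm_le_sum_coord hn.
exists (`|C| * m%:R) => _ [v /S_sph Sv <-]; apply: le_trans (hC v) _.
apply: le_trans (ler_norm _) _; rewrite normrM ler_wpM2l //.
rewrite ger0_norm ?sumr_ge0 //; apply: le_trans (sum_coord_le_norm2 v) _.
by rewrite Sv mulr1.
Qed.

Section Ext.
Variables (R : realType) (n : nat).

Lemma ext_neq0 (b : 'cV[R]_n) : ext b != 0.
Proof.
apply/eqP => /matrixP /(_ (rshift n 0) 0).
by rewrite /ext col_mxEd !mxE => /eqP; rewrite oner_eq0.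
Qed.

Lemma norm2_ext (b1 b2 : 'cV[R]_n) : norm2 (ext b1 - ext b2) = norm2 (b1 - b2).
Proof.
rewrite /ext opp_col_mx add_col_mx subrr /norm2 big_split_ord /=.
rewrite [X in _ + X]big1 ?addr0 => [|i _]; last by rewrite col_mxEd mxE expr0n.
congr Num.sqrt; apply: eq_bigr => i _; rewrite col_mxEu !mxE.
by rewrite -sqrrN opprB opprK addrC.
Qed.

End Ext.

Section ErrorCone.
Variables (R : realType) (n : nat) (nrm : 'cV[R]_(n + 1) -> R).
Hypothesis hn : is_norm nrm.

Lemma Aset_neq0 (b : 'cV[R]_n) : Aset nrm b !=set0.
Proof.
exists ((norm2 (- ext b))^-1 *: - ext b).
apply: cone_sphere_normalize; last by rewrite oppr_eq0 ext_neq0.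
by rewrite /= subrr (dual_norm0 hn) dual_norm_ge0.
Qed.

Lemma has_sup_dual_norm_Aset (b : 'cV[R]_n) :
  has_sup [set dual_norm nrm v | v in Aset nrm b].
Proof. by apply: has_sup_dual_norm_sphere (Aset_neq0 b) => // v []. Qed.

End ErrorCone.

Section L1Row.
Variables (R : realType) (N : nat).
Implicit Types r s : 'rV[R]_N.

Lemma norm1_row_ge0 r : 0 <= norm1_row r.
Proof. by apply: sumr_ge0 => j _. Qed.

Lemma norm1_rowZ a r : norm1_row (a *: r) = `|a| * norm1_row r.
Proof.
by rewrite /norm1_row mulr_sumr; apply: eq_bigr => j _; rewrite mxE normrM.
Qed.

Lemma norm1_rowB_le r s : norm1_row (r - s) <= norm1_row r + norm1_row s.
Proof.
rewrite /norm1_row -big_split /=; apply: ler_sum => j _.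
by rewrite !mxE ler_normB.
Qed.

End L1Row.

Section DesignMatrix.
Variables (R : realType) (m N : nat) (nrm : 'cV[R]_m -> R) (Z : 'M[R]_(m, N)).
Hypothesis hn : is_norm nrm.
Variable Rad : R.
Hypothesis hR : forall j, nrm (col j Z) <= Rad.

Lemma quad_formE (v : 'cV[R]_m) :
  (v^T *m Z *m Z^T *m v) 0 0 = \sum_j (v^T *m Z) 0 j ^+ 2.
Proof.
rewrite -mulmxA mxE; apply: eq_bigr => j _; rewrite expr2; congr (_ * _).
by rewrite !mxE; apply: eq_bigr => i _; rewrite !mxE mulrC.
Qed.

Lemma quad_form_le (u : 'cV[R]_m) :
  (u^T *m Z *m Z^T *m u) 0 0 <= dual_norm nrm u * Rad * norm1_row (u^T *m Z).
Proof.
rewrite quad_formE /norm1_row mulr_sumr; apply: ler_sum => j _.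
rewrite -real_normK ?num_real // expr2 mulrC ler_wpM2r // mulmx_tr_col.
apply: le_trans (normr_dotv_le hn u _) _.
by rewrite ler_wpM2l ?(dual_norm_ge0 hn).
Qed.

Lemma col_bound_ge0 (u : 'cV[R]_m) :
  0 < (u^T *m Z *m Z^T *m u) 0 0 -> 0 <= Rad.
Proof.
move=> q0; rewrite leNgt; apply/negP => Rad_lt0.
have := lt_le_trans q0 (quad_form_le u); apply/negP; rewrite -leNgt -mulrA.
rewrite mulr_ge0_le0 ?(dual_norm_ge0 hn) //.
by rewrite mulr_le0_ge0 ?(ltW Rad_lt0) ?norm1_row_ge0.
Qed.

Lemma restricted_eigenvalue_bound (S : set 'cV[R]_m) (g alpha P : R) v :
  0 <= Rad ->
  (forall u, (cone S `&` sphere (m:=m)) u ->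
     alpha <= (u^T *m Z *m Z^T *m u) 0 0) ->
  (forall u, (cone S `&` sphere (m:=m)) u -> dual_norm nrm u <= P) ->
  S v -> v != 0 -> norm1_row (v^T *m Z) <= g ->
  alpha * norm2 v <= P * Rad * g.
Proof.
move=> Rad0 hA hP Sv v0 vg.
have Au := cone_sphere_normalize Sv v0.
have s0 := norm2_gt0 v0; set s := norm2 v in s0 Au *; set u := _ *: v in Au.
have u_norm1 : norm1_row (u^T *m Z) = s^-1 * norm1_row (v^T *m Z).
  by rewrite linearZ /= -scalemxAl norm1_rowZ gtr0_norm ?invr_gt0.
rewrite -ler_pdivlMr //; apply: le_trans (hA u Au) _.
apply: le_trans (quad_form_le u) _.
rewrite u_norm1 -[leRHS]mulrA [g / s]mulrC.
apply: ler_pM;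
  rewrite ?mulr_ge0 ?invr_ge0 ?norm1_row_ge0 ?(dual_norm_ge0 hn) ?(ltW s0) //.
  by rewrite ler_wpM2r ?hP.
by rewrite ler_wpM2l ?invr_ge0 ?(ltW s0).
Qed.

End DesignMatrix.

Theorem theorem3p6 (R : realType) (n N : nat)
  (nrm : 'cV[R]_(n + 1) -> R) (Z : 'M[R]_(n + 1, N))
  (Rad gammaN alpha : R) (B : set 'cV[R]_n) (betahat betastar : 'cV[R]_n) :
  is_norm nrm ->
  (forall i : 'I_N, nrm (col i Z) <= Rad) ->
  0 < gammaN ->
  (* betahat is an optimal solution of the program *)
  (norm1_row ((ext betahat)^T *m Z) <= gammaN /\ B betahat) ->
  (forall beta, norm1_row ((ext beta)^T *m Z) <= gammaN -> B beta ->
     dual_norm nrm (ext betahat) <= dual_norm nrm (ext beta)) ->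
  (* betastar is feasible *)
  norm1_row ((Z^T *m ext betastar)^T) <= gammaN ->
  B betastar ->
  0 < alpha ->
  (forall v, Aset nrm betastar v -> alpha <= (v^T *m Z *m Z^T *m v) 0 0) ->
  norm2 (betahat - betastar) <=
    2 * Rad * gammaN / alpha *
    sup [set dual_norm nrm v | v in Aset nrm betastar].
Proof.
move=> hn hR hg [hat_feas _] hopt.
rewrite trmx_mul trmxK => star_feas Bstar ha hA.
set P := sup _.
have le_P u : Aset nrm betastar u -> dual_norm nrm u <= P.
  move=> Au; apply: (sup_upper_bound (has_sup_dual_norm_Aset hn betastar)).
  by exists u.
have [u0 Au0] := Aset_neq0 hn betastar.
have P0 : 0 <= P := le_trans (dual_norm_ge0 hn u0) (le_P u0 Au0).
have Rad0 : 0 <= Rad := col_bound_ge0 hn hR (lt_le_trans ha (hA u0 Au0)).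
rewrite -norm2_ext; set v := ext betahat - ext betastar.
have [->|v0] := eqVneq v 0.
  by rewrite norm2_0 mulr_ge0 // divr_ge0 ?(ltW ha) // !mulr_ge0 ?(ltW hg).
have Sv : dual_norm nrm (ext betastar + v) <= dual_norm nrm (ext betastar).
  by rewrite addrC subrK; apply: hopt star_feas Bstar.
have v_feas : norm1_row (v^T *m Z) <= 2 * gammaN.
  by rewrite linearB mulmxBl; apply: le_trans (norm1_rowB_le _ _) _; lra.
have bound := restricted_eigenvalue_bound hn hR Rad0 hA le_P Sv v0 v_feas.
by rewrite mulrAC ler_pdivlMr //; lra.
Qed.
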